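(* Let $\lambda=\lambda_0\lambda_1\lambda_2\cdots$ be Levin's number, regarded as the real number with binary expansion $0.\lambda_0\lambda_1\lambda_2\ldots$, and let $x_n=\{2^n\lambda\}$ for $n\ge1$. For every $d\ge 1$, with $e=2^d$ and $N=2^{e+d+1}$, the pair correlation function of $(x_n)_{n\ge1}$ satisfies $$F_N(2)\ \ge\ \frac{(e-d+1)(e-d)}{8e}.$$ In particular $F_N(2)\to\infty$ along $N=2^{2^d+d+1}$ as $d\to\infty$, so $(\{2^n\lambda\})_{n\ge1}$ does not have Poissonian pair correlations.
   Context: Over $\mathbb{F}_2$, $M_0=(1)$ and $M_{d+1}=\begin{pmatrix} M_d & M_d\\ 0 & M_d\end{pmatrix}$, so $M_d$ is $e\times e$ with $e=2^d$. $w_0,\dots,w_{2^e-1}$ are all vectors of $\mathbb{F}_2^e$ in increasing lexicographic order. Binary words and vectors are identified. $\lambda_d=(M_dw_0)(M_dw_1)\cdots(M_dw_{2^e-1})$ and Levin's number is $\lambda=\lambda_0\lambda_1\lambda_2\cdots$. For real $x$, $\{x\}=x-\lfloor x\rfloor$ and $\Vert x\Vert$ is the distance to the nearest integer. $F_N(s)=\frac1N\#\{(i,j):1\le i\ne j\le N,\ \Vert x_i-x_j\Vert<s/N\}$; a sequence has Poissonian pair correlations if $\lim_{N\to\infty}F_N(s)=2s$ for every $s\ge0$. *)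

From Stdlib Require Import Reals Lra Lia Arith List.
Import ListNotations.
Open Scope R_scope.

(* Entry (i,j) (0-indexed) of M_d over F_2 (true = 1):
   M_0 = (1),  M_{d+1} = [[M_d, M_d],[0, M_d]]. *)
Fixpoint Mentry (d i j : nat) : bool :=
  match d with
  | O => true
  | S d' =>
      let e := (2 ^ d')%nat in
      if (i <? e)%nat then
        (if (j <? e)%nat then Mentry d' i j else Mentry d' i (j - e))
      else
        (if (j <? e)%nat then false else Mentry d' (i - e) (j - e))
  end.

(* Component t (0-indexed) of w_k in F_2^e, where w_0,...,w_{2^e-1} list
   F_2^e in increasing lexicographic order: w_k is the e-bit binary
   representation of k, most significant bit first. *)
Definition wbit (e k t : nat) : bool := Nat.testbit k (e - 1 - t).

Definition Mw (d k i : nat) : bool :=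
  let e := (2 ^ d)%nat in
  fold_left xorb (map (fun j => andb (Mentry d i j) (wbit e k j)) (seq 0 e)) false.

(* The word lambda_d = (M_d w_0)(M_d w_1)...(M_d w_{2^e - 1}). *)
Definition lam_block (d : nat) : list bool :=
  let e := (2 ^ d)%nat in
  flat_map (fun k => map (fun i => Mw d k i) (seq 0 e)) (seq 0 (2 ^ e)).

(* n-th binary digit (0-indexed) of Levin's number lambda_0 lambda_1 ...
   (each block is nonempty, so the first n+1 blocks contain position n). *)
Definition levin_digit (n : nat) : bool :=
  nth n (flat_map lam_block (seq 0 (S n))) false.

Definition levin_term (n : nat) : R :=
  (if levin_digit n then 1 else 0) / 2 ^ (S n).

Definition fracR (x : R) : R := frac_part x.
Definition dist_int (x : R) : R := Rmin (fracR x) (1 - fracR x).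

Definition pair_count (x : nat -> R) (N : nat) (s : R) : nat :=
  length (filter (fun p : nat * nat =>
            let (i, j) := p in
            andb (negb (Nat.eqb i j))
                 (if Rlt_dec (dist_int (x i - x j)) (s / INR N) then true else false))
          (list_prod (seq 1 N) (seq 1 N))).

Definition F_pc (x : nat -> R) (N : nat) (s : R) : R :=
  / INR N * INR (pair_count x N s).

Definition poissonian_pc (x : nat -> R) : Prop :=
  forall s : R, 0 <= s -> Un_cv (fun N => F_pc x N s) (2 * s).

From Stdlib Require Import Reals Lra Lia List.
Open Scope R_scope.

(** Let e = 2^d.  For b < 2^e the vector w_b of length 2e starts with e
    zeros, so the block form of M_{d+1} makes the word M_{d+1} w_b of
    lambda_{d+1} a square u u with u = M_d w_b.  Since M_d is an involution
    over F_2, every rotation of u is again a word M_d w_b' (b' = rot d r b),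
    and since the first row of M_d is all ones, the leading bit of w_b (the
    parity of u) is rotation invariant, so rotations keep b < 2^(e-1).
    Reading the square of b from offset s1 and the square of
    rot d (s1 + e - s2) b from offset s2 therefore gives the same e + d
    digits whenever s1, s2 <= e - d, and the corresponding points
    x_n = {2^n lambda} are closer than 2^-(e+d) = 2/N with N = 2^(e+d+1).
    Counting these pairs (m(m-1) ordered offset pairs, m = e - d + 1, times
    at least 2^(e-2) words each, all inside [1, N]) gives
    F_N(2) >= (e-d+1)(e-d)/(8e), which is unbounded in d. *)

Section XorSums.
Local Open Scope nat_scope.
Local Open Scope bool_scope.

Definition xsum (n : nat) (f : nat -> bool) : bool :=
  fold_left xorb (map f (seq 0 n)) false.

Lemma xsum_S (n : nat) (f : nat -> bool) : xsum (S n) f = xorb (xsum n f) (f n).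
Proof. unfold xsum. now rewrite seq_S, map_app, fold_left_app. Qed.

Lemma xsum_ext (n : nat) (f g : nat -> bool) :
  (forall j, j < n -> f j = g j) -> xsum n f = xsum n g.
Proof.
  induction n as [|n IH]; intros Hfg; [reflexivity|].
  rewrite !xsum_S, IH by (intros; apply Hfg; lia). now rewrite Hfg by lia.
Qed.

Lemma xsum_false (n : nat) : xsum n (fun _ => false) = false.
Proof. induction n as [|n IH]; [reflexivity|]. now rewrite xsum_S, IH. Qed.

Lemma xsum_add (a b : nat) (f : nat -> bool) :
  xsum (a + b) f = xorb (xsum a f) (xsum b (fun j => f (a + j))).
Proof.
  induction b as [|b IH].
  - rewrite Nat.add_0_r. simpl. now destruct (xsum a f).
  - now rewrite Nat.add_succ_r, !xsum_S, IH, Bool.xorb_assoc.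
Qed.

Lemma xsum_xor (n : nat) (f g : nat -> bool) :
  xsum n (fun j => xorb (f j) (g j)) = xorb (xsum n f) (xsum n g).
Proof.
  induction n as [|n IH]; [reflexivity|].
  rewrite !xsum_S, IH. now destruct (xsum n f), (xsum n g), (f n), (g n).
Qed.

Lemma xsum_andl (n : nat) (b : bool) (f : nat -> bool) :
  xsum n (fun j => b && f j) = b && xsum n f.
Proof. destruct b; [reflexivity|]. apply xsum_false. Qed.

Lemma xsum_andr (n : nat) (b : bool) (f : nat -> bool) :
  xsum n (fun j => f j && b) = xsum n f && b.
Proof.
  rewrite (xsum_ext n _ (fun j => b && f j)) by (intros; apply Bool.andb_comm).
  now rewrite xsum_andl, Bool.andb_comm.
Qed.

Lemma xsum_swap (n m : nat) (g : nat -> nat -> bool) :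
  xsum n (fun i => xsum m (fun j => g i j)) = xsum m (fun j => xsum n (fun i => g i j)).
Proof.
  induction n as [|n IH].
  - symmetry. apply xsum_false.
  - rewrite xsum_S, IH, <- xsum_xor. apply xsum_ext. intros j _. now rewrite xsum_S.
Qed.

Lemma xsum_delta (n k : nat) (f : nat -> bool) :
  k < n -> xsum n (fun j => (k =? j) && f j) = f k.
Proof.
  induction n as [|n IH]; intros Hk; [lia|].
  rewrite xsum_S. destruct (Nat.eq_dec k n) as [->|Hne].
  - rewrite (xsum_ext n _ (fun _ => false)), xsum_false, Nat.eqb_refl; [reflexivity|].
    intros j Hj. destruct (Nat.eqb_spec n j); [lia|reflexivity].
  - rewrite IH by lia. destruct (Nat.eqb_spec k n); [lia|]. now destruct (f k).
Qed.

Lemma xsum_rot (e r : nat) (g : nat -> bool) :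
  0 < e -> xsum e (fun i => g ((i + r) mod e)) = xsum e g.
Proof.
  intros He.
  pose proof (Nat.mod_upper_bound r e ltac:(lia)) as Hr.
  set (r' := r mod e) in *.
  rewrite (xsum_ext e _ (fun i => g ((i + r') mod e)))
    by (intros; unfold r'; now rewrite Nat.Div0.add_mod_idemp_r).
  replace e with ((e - r') + r') at 1 by lia.
  rewrite xsum_add.
  rewrite (xsum_ext (e - r') _ (fun i => g (r' + i)))
    by (intros i Hi; f_equal; rewrite Nat.mod_small; lia).
  rewrite (xsum_ext r' _ g).
  2:{ intros j Hj. f_equal. replace (e - r' + j + r') with (j + 1 * e) by lia.
      rewrite Nat.Div0.mod_add. apply Nat.mod_small. lia. }
  replace (xsum e g) with (xsum (r' + (e - r')) g) by (f_equal; lia).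
  rewrite xsum_add. apply Bool.xorb_comm.
Qed.

End XorSums.

Section LevinMatrix.
Local Open Scope nat_scope.
Local Open Scope bool_scope.

Definition Mv (d : nat) (f : nat -> bool) (i : nat) : bool :=
  xsum (2 ^ d) (fun j => Mentry d i j && f j).

Lemma Mw_Mv (d k i : nat) : Mw d k i = Mv d (wbit (2 ^ d) k) i.
Proof. reflexivity. Qed.

Lemma Mv_ext (d : nat) (f g : nat -> bool) (i : nat) :
  (forall j, j < 2 ^ d -> f j = g j) -> Mv d f i = Mv d g i.
Proof. intros Hfg. apply xsum_ext. intros j Hj. now rewrite Hfg. Qed.

Lemma pow2_pos_nat (n : nat) : 0 < 2 ^ n.
Proof. apply Nat.neq_0_lt_0, Nat.pow_nonzero. lia. Qed.

Lemma Mentry_first_row (d j : nat) : Mentry d 0 j = true.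
Proof.
  revert j. induction d as [|d IH]; intros j; [reflexivity|].
  cbn [Mentry]. pose proof (pow2_pos_nat d).
  destruct (Nat.ltb_spec 0 (2 ^ d)); [|lia].
  destruct (j <? 2 ^ d); apply IH.
Qed.

Lemma Mentry_upper_left (d i j : nat) : i < 2 ^ d -> j < 2 ^ d ->
  Mentry (S d) i j = Mentry d i j.
Proof.
  intros Hi Hj. cbn [Mentry].
  now destruct (Nat.ltb_spec i (2 ^ d)), (Nat.ltb_spec j (2 ^ d)); try lia.
Qed.

Lemma Mentry_upper_right (d i j : nat) : i < 2 ^ d ->
  Mentry (S d) i (2 ^ d + j) = Mentry d i j.
Proof.
  intros Hi. cbn [Mentry].
  destruct (Nat.ltb_spec i (2 ^ d)), (Nat.ltb_spec (2 ^ d + j) (2 ^ d)); try lia.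
  now replace (2 ^ d + j - 2 ^ d) with j by lia.
Qed.

Lemma Mentry_lower_left (d i j : nat) : j < 2 ^ d ->
  Mentry (S d) (2 ^ d + i) j = false.
Proof.
  intros Hj. cbn [Mentry].
  now destruct (Nat.ltb_spec (2 ^ d + i) (2 ^ d)), (Nat.ltb_spec j (2 ^ d)); try lia.
Qed.

Lemma Mentry_lower_right (d i j : nat) :
  Mentry (S d) (2 ^ d + i) (2 ^ d + j) = Mentry d i j.
Proof.
  cbn [Mentry].
  destruct (Nat.ltb_spec (2 ^ d + i) (2 ^ d)), (Nat.ltb_spec (2 ^ d + j) (2 ^ d)); try lia.
  now replace (2 ^ d + i - 2 ^ d) with i by lia; replace (2 ^ d + j - 2 ^ d) with j by lia.
Qed.

Lemma Mentry_square (d i k : nat) : i < 2 ^ d -> k < 2 ^ d ->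
  xsum (2 ^ d) (fun j => Mentry d i j && Mentry d j k) = (i =? k).
Proof.
  revert i k. induction d as [|d IH]; intros i k Hi Hk.
  - simpl in *. now replace i with 0 by lia; replace k with 0 by lia.
  - assert (Hsplit : forall n, n < 2 ^ S d -> n < 2 ^ d \/ exists n', n' < 2 ^ d /\ n = 2 ^ d + n')
      by (intros n Hn; destruct (Nat.ltb_spec n (2 ^ d)); [left | right; exists (n - 2 ^ d)];
          simpl in Hn; lia).
    replace (2 ^ S d) with (2 ^ d + 2 ^ d) by (simpl; lia).
    rewrite xsum_add.
    destruct (Hsplit i Hi) as [Hi' | [i' [Hi' ->]]], (Hsplit k Hk) as [Hk' | [k' [Hk' ->]]].
    + rewrite (xsum_ext _ _ (fun j => Mentry d i j && Mentry d j k))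
        by (intros j Hj; now rewrite !Mentry_upper_left).
      rewrite (xsum_ext _ (fun j => _ && Mentry (S d) (2 ^ d + j) k) (fun _ => false))
        by (intros j Hj; now rewrite Mentry_lower_left, Bool.andb_false_r).
      rewrite IH, xsum_false by lia. now destruct (i =? k).
    + rewrite (xsum_ext _ _ (fun j => Mentry d i j && Mentry d j k'))
        by (intros j Hj; now rewrite Mentry_upper_left, Mentry_upper_right).
      rewrite (xsum_ext _ (fun j => _ && Mentry (S d) (2 ^ d + j) _)
                           (fun j => Mentry d i j && Mentry d j k'))
        by (intros j Hj; now rewrite Mentry_upper_right, Mentry_lower_right).
      rewrite Bool.xorb_nilpotent. symmetry. apply Nat.eqb_neq. lia.
    + rewrite (xsum_ext _ _ (fun _ => false))
        by (intros j Hj; now rewrite Mentry_lower_left).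
      rewrite (xsum_ext _ (fun j => _ && Mentry (S d) (2 ^ d + j) k) (fun _ => false))
        by (intros j Hj; now rewrite (Mentry_lower_left d j k), Bool.andb_false_r).
      rewrite xsum_false. symmetry. apply Nat.eqb_neq. lia.
    + rewrite (xsum_ext _ _ (fun _ => false))
        by (intros j Hj; now rewrite Mentry_lower_left).
      rewrite (xsum_ext _ (fun j => _ && Mentry (S d) (2 ^ d + j) _)
                           (fun j => Mentry d i' j && Mentry d j k'))
        by (intros j Hj; now rewrite !Mentry_lower_right).
      rewrite xsum_false, IH by lia. simpl.
      destruct (Nat.eqb_spec i' k'), (Nat.eqb_spec (2 ^ d + i') (2 ^ d + k')); auto; lia.
Qed.

Lemma Mv_involutive (d : nat) (f : nat -> bool) (i : nat) :
  i < 2 ^ d -> Mv d (Mv d f) i = f i.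
Proof.
  intros Hi. unfold Mv.
  rewrite (xsum_ext _ _ (fun j => xsum (2 ^ d) (fun k => Mentry d i j && Mentry d j k && f k))).
  2:{ intros j _. rewrite <- xsum_andl. apply xsum_ext. intros. apply Bool.andb_assoc. }
  rewrite xsum_swap.
  rewrite (xsum_ext _ _ (fun k => (i =? k) && f k))
    by (intros k Hk; now rewrite xsum_andr, Mentry_square).
  now apply xsum_delta.
Qed.

Lemma Mv_Mw (d b j : nat) : j < 2 ^ d -> Mv d (Mw d b) j = wbit (2 ^ d) b j.
Proof.
  intros Hj. rewrite (Mv_ext d _ (Mv d (wbit (2 ^ d) b))) by (intros; apply Mw_Mv).
  now apply Mv_involutive.
Qed.

End LevinMatrix.

Section BinaryWords.
Local Open Scope nat_scope.

Fixpoint encode (n : nat) (f : nat -> bool) : nat :=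
  match n with
  | O => 0
  | S n' => 2 * encode n' f + (if f n' then 1 else 0)
  end.

Lemma encode_ext (n : nat) (f g : nat -> bool) :
  (forall j, j < n -> f j = g j) -> encode n f = encode n g.
Proof.
  induction n as [|n IH]; intros Hfg; simpl; [reflexivity|].
  rewrite IH by (intros; apply Hfg; lia). now rewrite Hfg by lia.
Qed.

Lemma encode_lt (n : nat) (f : nat -> bool) : encode n f < 2 ^ n.
Proof. induction n as [|n IH]; simpl; [lia|]. destruct (f n); lia. Qed.

Lemma encode_lt_half (n : nat) (f : nat -> bool) :
  f 0 = false -> encode (S n) f < 2 ^ n.
Proof.
  intros H0. induction n as [|n IH].
  - simpl. rewrite H0. lia.
  - change (encode (S (S n)) f) with (2 * encode (S n) f + (if f (S n) then 1 else 0)).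
    rewrite Nat.pow_succ_r'. destruct (f (S n)); lia.
Qed.

Lemma wbit_encode (n : nat) (f : nat -> bool) (j : nat) :
  j < n -> wbit n (encode n f) j = f j.
Proof.
  unfold wbit. revert j. induction n as [|n IH]; intros j Hj; [lia|].
  change (encode (S n) f) with (2 * encode n f + (if f n then 1 else 0)).
  destruct (Nat.eq_dec j n) as [->|Hne].
  - replace (S n - 1 - n) with 0 by lia.
    destruct (f n); [apply Nat.testbit_odd_0|rewrite Nat.add_0_r; apply Nat.testbit_even_0].
  - replace (S n - 1 - j) with (S (n - 1 - j)) by lia.
    destruct (f n); [rewrite Nat.testbit_odd_succ' | rewrite Nat.add_0_r, Nat.testbit_even_succ'];
      apply IH; lia.
Qed.

Lemma testbit_small (a k : nat) : a < 2 ^ k -> Nat.testbit a k = false.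
Proof.
  intros Ha. destruct (Nat.eq_dec a 0) as [->|Ha0]; [apply Nat.bits_0|].
  apply Nat.bits_above_log2. apply Nat.log2_lt_pow2; lia.
Qed.

Lemma encode_wbit (n b : nat) : b < 2 ^ n -> encode n (wbit n b) = b.
Proof.
  unfold wbit. revert b. induction n as [|n IH]; intros b Hb; [simpl in *; lia|].
  change (encode (S n) ?f) with (2 * encode n f + (if f n then 1 else 0)).
  rewrite (encode_ext n _ (fun j => Nat.testbit (Nat.div2 b) (n - 1 - j)))
    by (intros j Hj; rewrite Nat.testbit_div2; f_equal; lia).
  rewrite IH by (rewrite Nat.div2_div; apply Nat.Div0.div_lt_upper_bound; simpl in Hb; lia).
  replace (S n - 1 - n) with 0 by lia.
  rewrite (Nat.div2_odd b) at 3. rewrite Nat.bit0_odd. destruct (Nat.odd b); simpl; lia.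
Qed.

End BinaryWords.

Section LevinDigits.
Local Open Scope nat_scope.

Lemma length_flat_map_const {A B : Type} (f : A -> list B) (l : list A) (c : nat) :
  (forall x, In x l -> length (f x) = c) -> length (flat_map f l) = length l * c.
Proof.
  induction l as [|x l IH]; intros Hc; simpl; [reflexivity|].
  rewrite length_app, Hc by (simpl; auto). rewrite IH by (intros; apply Hc; simpl; auto). lia.
Qed.

Lemma nth_flat_map_const {B : Type} (f : nat -> list B) (n c k i : nat) (dflt : B) :
  (forall x, length (f x) = c) -> k < n -> i < c ->
  nth (k * c + i) (flat_map f (seq 0 n)) dflt = nth i (f k) dflt.
Proof.
  intros Hc Hk Hi.
  replace n with (k + S (n - S k)) by lia.
  rewrite seq_app, flat_map_app. simpl.
  rewrite app_nth2; rewrite (length_flat_map_const f (seq 0 k) c), length_seq by auto; [|lia].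
  replace (k * c + i - k * c) with i by lia. apply app_nth1. rewrite Hc. lia.
Qed.

Lemma length_lam_block (d : nat) : length (lam_block d) = 2 ^ (2 ^ d) * 2 ^ d.
Proof.
  unfold lam_block. rewrite (length_flat_map_const _ _ (2 ^ d)), length_seq; [reflexivity|].
  intros. now rewrite length_map, length_seq.
Qed.

Lemma nth_lam_block (d k i : nat) : k < 2 ^ (2 ^ d) -> i < 2 ^ d ->
  nth (k * 2 ^ d + i) (lam_block d) false = Mw d k i.
Proof.
  intros Hk Hi. unfold lam_block.
  rewrite (nth_flat_map_const _ _ (2 ^ d)); auto.
  - rewrite nth_indep with (d' := Mw d k 0) by (now rewrite length_map, length_seq).
    now rewrite map_nth, seq_nth.
  - intros. now rewrite length_map, length_seq.
Qed.

Definition block_start (d : nat) : nat := length (flat_map lam_block (seq 0 d)).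

Lemma block_start_S (d : nat) : block_start (S d) = block_start d + 2 ^ (2 ^ d) * 2 ^ d.
Proof.
  unfold block_start. rewrite seq_S, flat_map_app, length_app. simpl.
  now rewrite app_nil_r, length_lam_block.
Qed.

(** Every block is nonempty. *)
Lemma block_start_ge (d : nat) : d <= block_start d.
Proof.
  induction d as [|d IH]; [unfold block_start; simpl; lia|].
  rewrite block_start_S. pose proof (pow2_pos_nat (2 ^ d)). pose proof (pow2_pos_nat d). nia.
Qed.

Lemma block_start_bound (d : nat) : block_start (S d) <= 2 ^ (S d) * 2 ^ (2 ^ d).
Proof.
  induction d as [|d IH].
  - rewrite block_start_S. unfold block_start. simpl. lia.
  - rewrite block_start_S.
    assert (2 ^ (2 ^ d) <= 2 ^ (2 ^ S d)) by (apply Nat.pow_le_mono_r; simpl; lia).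
    change (2 ^ S (S d)) with (2 * 2 ^ S d). nia.
Qed.

Lemma levin_digit_word (d k i : nat) : k < 2 ^ (2 ^ d) -> i < 2 ^ d ->
  levin_digit (block_start d + k * 2 ^ d + i) = Mw d k i.
Proof.
  intros Hk Hi. unfold levin_digit.
  assert (Hlt : (k + 1) * 2 ^ d <= 2 ^ (2 ^ d) * 2 ^ d) by (apply Nat.mul_le_mono_r; lia).
  pose proof (block_start_ge d).
  replace (S (block_start d + k * 2 ^ d + i)) with (d + S (block_start d + k * 2 ^ d + i - d))
    by lia.
  rewrite seq_app, flat_map_app. simpl.
  rewrite app_nth2; change (length (flat_map lam_block (seq 0 d))) with (block_start d); [|lia].
  replace (block_start d + k * 2 ^ d + i - block_start d) with (k * 2 ^ d + i) by lia.
  rewrite app_nth1 by (rewrite length_lam_block; lia).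
  now apply nth_lam_block.
Qed.

(** Levin's number has infinitely many zero digits: w_0 = 0 gives M_d w_0 = 0. *)
Lemma levin_digit_zeros (n : nat) : exists m, n <= m /\ levin_digit m = false.
Proof.
  exists (block_start n). split; [apply block_start_ge|].
  pose proof (levin_digit_word n 0 0 (pow2_pos_nat _) (pow2_pos_nat _)) as Hw.
  rewrite Nat.mul_0_l, !Nat.add_0_r in Hw. rewrite Hw, Mw_Mv. unfold Mv.
  rewrite (xsum_ext _ _ (fun _ => false))
    by (intros; unfold wbit; now rewrite Nat.bits_0, Bool.andb_false_r).
  apply xsum_false.
Qed.

End LevinDigits.

Section SquaresAndRotations.
Local Open Scope nat_scope.

Lemma Mentry_right_half (d i j : nat) : i < 2 ^ d + 2 ^ d ->
  Mentry (S d) i (2 ^ d + j) = Mentry d (i mod 2 ^ d) j.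
Proof.
  intros Hi. destruct (Nat.ltb_spec i (2 ^ d)).
  - rewrite Nat.mod_small by lia. now apply Mentry_upper_right.
  - replace i with (2 ^ d + (i - 2 ^ d)) by lia.
    rewrite Mentry_lower_right. f_equal.
    replace (2 ^ d + (i - 2 ^ d)) with (i - 2 ^ d + 1 * 2 ^ d) by lia.
    rewrite Nat.Div0.mod_add. symmetry. apply Nat.mod_small. lia.
Qed.

(** For b < 2^e (e = 2^d) the first half of w_b in F_2^(2e) vanishes, so the
    word M_{d+1} w_b of lambda_{d+1} is the square of the word M_d w_b. *)
Lemma Mw_square (d b i : nat) : b < 2 ^ (2 ^ d) -> i < 2 ^ d + 2 ^ d ->
  Mw (S d) b i = Mw d b (i mod 2 ^ d).
Proof.
  intros Hb Hi. rewrite !Mw_Mv. unfold Mv.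
  replace (2 ^ S d) with (2 ^ d + 2 ^ d) by (simpl; lia).
  rewrite xsum_add.
  rewrite (xsum_ext (2 ^ d) _ (fun _ => false)), xsum_false.
  2:{ intros j Hj. unfold wbit. rewrite testbit_small, Bool.andb_false_r; [reflexivity|].
      apply Nat.lt_le_trans with (2 ^ (2 ^ d)); [assumption|].
      apply Nat.pow_le_mono_r; lia. }
  apply xsum_ext. intros j Hj.
  rewrite Mentry_right_half by assumption. unfold wbit. do 2 f_equal. lia.
Qed.

Lemma levin_digit_square (d b t : nat) : b < 2 ^ (2 ^ d) -> t < 2 ^ d + 2 ^ d ->
  levin_digit (block_start (S d) + b * (2 ^ d + 2 ^ d) + t) = Mw d b (t mod 2 ^ d).
Proof.
  intros Hb Ht.
  replace (2 ^ d + 2 ^ d) with (2 ^ S d) by (simpl; lia).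
  assert (Hb' : b < 2 ^ (2 ^ S d))
    by (apply Nat.lt_le_trans with (2 ^ (2 ^ d)); [|apply Nat.pow_le_mono_r; simpl]; lia).
  rewrite levin_digit_word by (try exact Hb'; simpl; lia).
  now apply Mw_square.
Qed.

Lemma Mw_injective (d b1 b2 : nat) : b1 < 2 ^ (2 ^ d) -> b2 < 2 ^ (2 ^ d) ->
  (forall i, i < 2 ^ d -> Mw d b1 i = Mw d b2 i) -> b1 = b2.
Proof.
  intros Hb1 Hb2 Heq.
  rewrite <- (encode_wbit (2 ^ d) b1 Hb1), <- (encode_wbit (2 ^ d) b2 Hb2).
  apply encode_ext. intros j Hj.
  rewrite <- !Mv_Mw by assumption. now apply Mv_ext.
Qed.

(** [rot d r b] is the index b' such that M_d w_b' is M_d w_b rotated left by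
    r; it exists because M_d is invertible. *)
Definition rot (d r b : nat) : nat :=
  encode (2 ^ d) (Mv d (fun i => Mw d b ((i + r) mod 2 ^ d))).

Lemma rot_lt (d r b : nat) : rot d r b < 2 ^ (2 ^ d).
Proof. apply encode_lt. Qed.

Lemma Mw_rot (d r b i : nat) : i < 2 ^ d ->
  Mw d (rot d r b) i = Mw d b ((i + r) mod 2 ^ d).
Proof.
  intros Hi. rewrite Mw_Mv, (Mv_ext d _ (Mv d (fun i => Mw d b ((i + r) mod 2 ^ d)))).
  - now rewrite Mv_involutive.
  - intros j Hj. now apply wbit_encode.
Qed.

Lemma rotation_surjective (e r i : nat) : i < e -> exists i', i' < e /\ (i' + r) mod e = i.
Proof.
  intros Hi. exists ((i + (e - r mod e)) mod e). split; [apply Nat.mod_upper_bound; lia|].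
  pose proof (Nat.mod_upper_bound r e ltac:(lia)). pose proof (Nat.div_mod_eq r e).
  rewrite Nat.Div0.add_mod_idemp_l.
  replace (i + (e - r mod e) + r) with (i + (1 + r / e) * e) by nia.
  rewrite Nat.Div0.mod_add. now apply Nat.mod_small.
Qed.

Lemma rot_injective (d r b1 b2 : nat) : b1 < 2 ^ (2 ^ d) -> b2 < 2 ^ (2 ^ d) ->
  rot d r b1 = rot d r b2 -> b1 = b2.
Proof.
  intros Hb1 Hb2 Heq. apply (Mw_injective d); auto.
  intros i Hi. destruct (rotation_surjective (2 ^ d) r i Hi) as [i' [Hi' <-]].
  now rewrite <- !Mw_rot, Heq.
Qed.

(** The leading bit of w_b is the parity of M_d w_b (the first row of M_d is
    all ones), which rotation preserves: rotation maps the b < 2^(e-1) into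
    themselves. *)
Lemma rot_lt_half (d r b : nat) : b < 2 ^ (2 ^ d - 1) -> rot d r b < 2 ^ (2 ^ d - 1).
Proof.
  intros Hb. pose proof (pow2_pos_nat d) as He. unfold rot.
  replace (2 ^ d) with (S (2 ^ d - 1)) at 1 by lia.
  apply encode_lt_half. unfold Mv.
  rewrite (xsum_ext _ _ (fun j => Mw d b ((j + r) mod 2 ^ d)))
    by (intros; now rewrite Mentry_first_row).
  rewrite xsum_rot by assumption.
  transitivity (Mv d (Mw d b) 0).
  - apply xsum_ext. intros. now rewrite Mentry_first_row.
  - rewrite Mv_Mw by assumption. unfold wbit. rewrite Nat.sub_0_r. now apply testbit_small.
Qed.

End SquaresAndRotations.

Section BinaryExpansion.

Variable a : nat -> bool.

Definition bit (b : bool) : R := if b then 1 else 0.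

Fixpoint window (n L : nat) : R :=
  match L with
  | O => 0
  | S L' => window n L' + bit (a (n + L')) / 2 ^ S L'
  end.

Lemma pow2_pos (n : nat) : 0 < 2 ^ n.
Proof. apply pow_lt. lra. Qed.

Lemma bit_bounds (b : bool) : 0 <= bit b <= 1.
Proof. destruct b; simpl; lra. Qed.

Lemma partial_sum_window (K : nat) :
  sum_f_R0 (fun k => bit (a k) / 2 ^ S k) K = window 0 (S K).
Proof. induction K as [|K IH]; [simpl; ring|]. now rewrite tech5, IH. Qed.

Lemma window_split (n W L : nat) :
  window n (W + L) = window n W + window (n + W) L / 2 ^ W.
Proof.
  pose proof (pow2_pos W).
  induction L as [|L IH]; [rewrite Nat.add_0_r; simpl; field; lra|].
  rewrite Nat.add_succ_r. cbn [window]. rewrite IH, Nat.add_assoc.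
  replace (S (W + L)) with (W + S L)%nat by lia. rewrite pow_add.
  field. split; apply pow_nonzero; lra.
Qed.

Lemma window_prefix_integer (n : nat) : exists k : nat, 2 ^ n * window 0 n = INR k.
Proof.
  induction n as [|n [k Hk]]; [exists 0%nat; simpl; ring|].
  exists (2 * k + if a n then 1 else 0)%nat.
  simpl window. rewrite plus_INR, mult_INR, <- Hk. pose proof (pow2_pos n).
  unfold bit. destruct (a n); simpl; field; lra.
Qed.

Lemma window_bounds (n L : nat) : 0 <= window n L <= 1 - / 2 ^ L.
Proof.
  induction L as [|L IH]; simpl; [lra|].
  pose proof (bit_bounds (a (n + L))). pose proof (Rinv_0_lt_compat _ (pow2_pos L)).
  rewrite Rinv_mult. unfold Rdiv. rewrite Rinv_mult. nra.
Qed.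

Lemma window_zero_bound (n L t0 : nat) : (t0 < L)%nat -> a (n + t0) = false ->
  window n L <= 1 - / 2 ^ L - / 2 ^ S t0.
Proof.
  intros Ht0 Hz. induction L as [|L IH]; [lia|]. simpl.
  pose proof (bit_bounds (a (n + L))). pose proof (Rinv_0_lt_compat _ (pow2_pos L)).
  unfold Rdiv. rewrite !Rinv_mult.
  destruct (Nat.eq_dec t0 L) as [->|Hne].
  - rewrite Hz. pose proof (window_bounds n L). simpl. lra.
  - specialize (IH ltac:(lia)). simpl in IH. rewrite Rinv_mult in IH. nra.
Qed.

Lemma window_eq (n1 n2 W : nat) :
  (forall t, (t < W)%nat -> a (n1 + t) = a (n2 + t)) -> window n1 W = window n2 W.
Proof.
  intros Hw. induction W as [|W IH]; simpl; [reflexivity|].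
  rewrite IH by (intros; apply Hw; lia). now rewrite Hw by lia.
Qed.

Lemma scaled_partial_sum (n W m0 K : nat) :
  (n + W <= m0 <= K)%nat -> a m0 = false ->
  exists T, 0 <= T <= 1 - / 2 ^ S m0 /\
    2 ^ n * window 0 (S K) = 2 ^ n * window 0 n + window n W + T / 2 ^ W.
Proof.
  intros Hm0 Hz. set (L := (S K - n - W)%nat).
  exists (window (n + W) L). split.
  - pose proof (window_bounds (n + W) L).
    pose proof (window_zero_bound (n + W) L (m0 - n - W) ltac:(unfold L; lia)
                  ltac:(now replace (n + W + (m0 - n - W))%nat with m0 by lia)).
    assert (/ 2 ^ S m0 <= / 2 ^ S (m0 - n - W))
      by (apply Rinv_le_contravar; [apply pow2_pos | apply Rle_pow; [lra | lia]]).
    pose proof (pow2_pos L). pose proof (Rinv_0_lt_compat _ (pow2_pos L)). lra.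
  - replace (S K) with (n + (W + L))%nat by (unfold L; lia).
    rewrite !window_split. simpl (0 + n)%nat.
    field. split; apply pow_nonzero; lra.
Qed.

End BinaryExpansion.

Lemma Un_cv_const (c : R) : Un_cv (fun _ => c) c.
Proof.
  intros eps Heps. exists 0%nat. intros. unfold Rdist. rewrite Rminus_diag, Rabs_R0. lra.
Qed.

Lemma Un_cv_abs_le (u : nat -> R) (l B : R) :
  Un_cv u l -> (forall n, Rabs (u n) <= B) -> Rabs l <= B.
Proof.
  intros Hu HB. apply Rle_cv_lim with (Un := fun n => Rabs (u n)) (Vn := fun _ => B); auto.
  - now apply cv_cvabs.
  - apply Un_cv_const.
Qed.

Lemma Un_cv_affine (u : nat -> R) (l A c : R) :
  Un_cv u l -> Un_cv (fun n => A * u n - c) (A * l - c).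
Proof.
  intros Hu. apply CV_minus; [|apply Un_cv_const].
  apply CV_mult; [apply Un_cv_const | exact Hu].
Qed.

Lemma dist_int_near (z : Z) (r : R) : Rabs r < 1 -> dist_int (IZR z + r) <= Rabs r.
Proof.
  intros Hr. unfold dist_int, fracR, frac_part, Int_part.
  destruct (Rle_or_lt 0 r) as [Hp|Hn].
  - rewrite Rabs_right in * by lra.
    assert (Hup : up (IZR z + r) = (z + 1)%Z)
      by (symmetry; apply tech_up; rewrite plus_IZR; simpl; lra).
    rewrite Hup, minus_IZR, plus_IZR.
    apply Rle_trans with (IZR z + r - (IZR z + 1 - 1)); [apply Rmin_l | lra].
  - rewrite Rabs_left in * by lra.
    assert (Hup : up (IZR z + r) = z) by (symmetry; apply tech_up; lra).
    rewrite Hup, minus_IZR.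
    apply Rle_trans with (1 - (IZR z + r - (IZR z - 1))); [apply Rmin_r | lra].
Qed.

(** Strictness comes from a later zero digit,
    which keeps both tails uniformly below 1. *)
Lemma fractional_parts_close (a : nat -> bool) (lam : R) (n1 n2 W : nat) :
  (forall n, exists m, (n <= m)%nat /\ a m = false) ->
  infinite_sum (fun k => bit (a k) / 2 ^ S k) lam ->
  (forall t, (t < W)%nat -> a (n1 + t)%nat = a (n2 + t)%nat) ->
  dist_int (fracR (2 ^ n1 * lam) - fracR (2 ^ n2 * lam)) < / 2 ^ W.
Proof.
  intros Hzeros Hlam Hw.
  destruct (Hzeros (n1 + n2 + W)%nat) as [m0 [Hm0 Hz]].
  destruct (window_prefix_integer a n1) as [k1 Hk1], (window_prefix_integer a n2) as [k2 Hk2].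
  pose proof (pow2_pos W) as HW.
  set (s := fun K => (2 ^ n1 - 2 ^ n2) * sum_f_R0 (fun k => bit (a k) / 2 ^ S k) (K + m0)
                     - (INR k1 - INR k2)).
  set (r := (2 ^ n1 - 2 ^ n2) * lam - (INR k1 - INR k2)).
  assert (Hs : forall K, Rabs (s K) <= (1 - / 2 ^ S m0) / 2 ^ W).
  { intros K.
    destruct (scaled_partial_sum a n1 W m0 (K + m0) ltac:(lia) Hz) as [T1 [HT1 E1]].
    destruct (scaled_partial_sum a n2 W m0 (K + m0) ltac:(lia) Hz) as [T2 [HT2 E2]].
    replace (s K) with ((T1 - T2) / 2 ^ W).
    2:{ unfold s. rewrite partial_sum_window, Rmult_minus_distr_r, E1, E2, <- Hk1, <- Hk2.
        rewrite (window_eq a n1 n2 W Hw). field. lra. }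
    unfold Rdiv. rewrite Rabs_mult, Rabs_inv, (Rabs_right (2 ^ W)) by lra.
    apply Rmult_le_compat_r; [left; apply Rinv_0_lt_compat; lra|].
    apply Rabs_le. lra. }
  assert (Hr : Rabs r < / 2 ^ W).
  { apply Rle_lt_trans with ((1 - / 2 ^ S m0) / 2 ^ W).
    - apply (Un_cv_abs_le s); [|exact Hs].
      apply Un_cv_affine, CV_shift', Hlam.
    - pose proof (Rinv_0_lt_compat _ (pow2_pos (S m0))).
      pose proof (Rinv_0_lt_compat _ HW). unfold Rdiv. nra. }
  assert (Hr1 : Rabs r < 1).
  { apply Rlt_le_trans with (/ 2 ^ W); [exact Hr|].
    rewrite <- Rinv_1. apply Rinv_le_contravar; [lra | apply pow_R1_Rle; lra]. }
  unfold fracR, frac_part.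
  replace (2 ^ n1 * lam - IZR (Int_part (2 ^ n1 * lam))
           - (2 ^ n2 * lam - IZR (Int_part (2 ^ n2 * lam))))
    with (IZR (Z.of_nat k1 - Z.of_nat k2 - Int_part (2 ^ n1 * lam) + Int_part (2 ^ n2 * lam)) + r)
    by (unfold r; rewrite plus_IZR, !minus_IZR, <- !INR_IZR_INZ; ring).
  apply Rle_lt_trans with (Rabs r); [now apply dist_int_near | exact Hr].
Qed.

Section Counting.
Local Open Scope nat_scope.

Lemma NoDup_flat_map_disjoint {A B : Type} (f : A -> list B) (l : list A) :
  NoDup l -> (forall x, In x l -> NoDup (f x)) ->
  (forall x1 x2 y, In x1 l -> In x2 l -> In y (f x1) -> In y (f x2) -> x1 = x2) ->
  NoDup (flat_map f l).
Proof.
  intros Hl Hf Hdisj. induction l as [|x l IH]; simpl; [constructor|].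
  inversion Hl as [|? ? Hx Hl']; subst. apply NoDup_app.
  - apply Hf. now left.
  - apply IH; auto.
    + intros; apply Hf; now right.
    + intros x1 x2 y ? ?; apply Hdisj; now right.
  - intros y Hy Hy'. apply in_flat_map in Hy' as [x' [Hx' Hy']].
    assert (x = x') as <- by (apply (Hdisj x x' y); simpl; auto).
    contradiction.
Qed.

Lemma length_flat_map_ge {A B : Type} (f : A -> list B) (l : list A) (c : nat) :
  (forall x, In x l -> c <= length (f x)) -> length l * c <= length (flat_map f l).
Proof.
  induction l as [|x l IH]; intros Hc; simpl; [lia|].
  rewrite length_app.
  pose proof (Hc x (or_introl eq_refl)). pose proof (IH (fun y Hy => Hc y (or_intror Hy))). lia.
Qed.

Lemma count_stay_below (f : nat -> nat) (B H : nat) :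
  B <= H -> (forall b, b < H -> f b < H) ->
  (forall b1 b2, b1 < H -> b2 < H -> f b1 = f b2 -> b1 = b2) ->
  B - (H - B) <= length (filter (fun b => f b <? B) (seq 0 B)).
Proof.
  intros HBH Hf Hinj.
  pose proof (filter_length (fun b => f b <? B) (seq 0 B)) as Hsplit.
  rewrite length_seq in Hsplit.
  set (out := filter (fun b => negb (f b <? B)) (seq 0 B)) in *.
  assert (Hout : length (map f out) <= length (seq B (H - B))).
  { apply NoDup_incl_length.
    - apply NoDup_map_NoDup_ForallPairs; [|apply NoDup_filter, seq_NoDup].
      intros b1 b2 Hb1 Hb2. apply filter_In in Hb1 as [Hb1 _], Hb2 as [Hb2 _].
      apply in_seq in Hb1, Hb2. apply Hinj; lia.
    - intros y Hy. apply in_map_iff in Hy as [b [<- Hb]].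
      apply filter_In in Hb as [Hb Hfb]. apply in_seq in Hb. apply in_seq.
      destruct (Nat.ltb_spec (f b) B); [discriminate|].
      pose proof (Hf b ltac:(lia)). lia. }
  rewrite length_map, length_seq in Hout. lia.
Qed.

Lemma pair_count_ge (x : nat -> R) (N : nat) (s : R) (l : list (nat * nat)) :
  NoDup l ->
  (forall i j, In (i, j) l ->
     1 <= i <= N /\ 1 <= j <= N /\ i <> j /\ (dist_int (x i - x j) < s / INR N)%R) ->
  length l <= pair_count x N s.
Proof.
  intros Hl Hin. unfold pair_count. apply NoDup_incl_length; [exact Hl|].
  intros [i j] Hij. destruct (Hin i j Hij) as (Hi & Hj & Hne & Hclose).
  apply filter_In. split.
  - apply in_prod; apply in_seq; lia.
  - apply andb_true_intro. split.
    + apply Bool.negb_true_iff, Nat.eqb_neq, Hne.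
    + now destruct Rlt_dec.
Qed.

End Counting.

Section LevinClosePairs.
Local Open Scope nat_scope.

Variable d : nat.
Hypothesis Hd : 1 <= d.

Let e := 2 ^ d.
(** Per pair of offsets we find Q = 2^(e-2) words; the words b < B are the
    ones whose squares lie below position N = 2^(e+d+1). *)
Let Q := 2 ^ (e - 2).
Let B := 2 * Q - Q / 2.
(** The offsets used are 0, ..., e - d, i.e. m of them. *)
Let m := e - d + 1.

Lemma e_bounds : d + 1 <= e /\ 2 <= e.
Proof.
  pose proof (Nat.pow_gt_lin_r 2 d ltac:(lia)).
  pose proof (Nat.pow_le_mono_r 2 1 d ltac:(lia) Hd). simpl in *. unfold e. lia.
Qed.

Definition pos (b s : nat) : nat := block_start (S d) + b * (e + e) + s.

Lemma pos_injective (b s b' s' : nat) : s < e + e -> s' < e + e ->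
  pos b s = pos b' s' -> b = b' /\ s = s'.
Proof.
  unfold pos. intros Hs Hs' Heq.
  assert (b = b') as <-; [|lia].
  destruct (Nat.lt_trichotomy b b') as [Hlt|[Heqb|Hlt]]; [exfalso|exact Heqb|exfalso]; nia.
Qed.

Lemma pos_range (b s : nat) : b < B -> s <= e - d -> 1 <= pos b s <= 2 ^ (e + d + 1).
Proof.
  intros Hb Hs. destruct e_bounds as [He1 He2].
  pose proof (block_start_ge (S d)).
  assert (EQ : 2 ^ e = 4 * Q) by (unfold Q; replace e with (S (S (e - 2))) at 1 by lia; simpl; lia).
  assert (EN : 2 ^ (e + d + 1) = 8 * Q * e) by (rewrite !Nat.pow_add_r, EQ; fold e; simpl; lia).
  assert (Ehalf : 2 * (Q / 2) <= Q <= 2 * (Q / 2) + 1)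
    by (pose proof (Nat.div_mod Q 2 ltac:(lia)); pose proof (Nat.mod_upper_bound Q 2 ltac:(lia));
        lia).
  assert (Hprev : block_start d <= 2 * e * (Q / 2) + e + d).
  { destruct (Nat.eq_dec d 1) as [->|Hd1]; [unfold e in *; cbv; lia|].
    pose proof (block_start_bound (d - 1)) as Hb'.
    replace (S (d - 1)) with d in Hb' by lia. fold e in Hb'.
    assert (Hee : e = 2 * 2 ^ (d - 1))
      by (unfold e; replace d with (S (d - 1)) at 1 by lia; reflexivity).
    assert (2 ^ (2 ^ (d - 1)) <= Q)
      by (apply Nat.pow_le_mono_r; pose proof (Nat.pow_le_mono_r 2 1 (d - 1)); simpl in *; lia).
    nia. }
  unfold pos. rewrite block_start_S. fold e. rewrite EQ, EN.
  split; [lia|]. unfold B.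
  assert ((2 * Q - Q / 2 - 1) * (e + e) + 2 * e * (Q / 2) + 2 * e = 4 * Q * e) by nia.
  nia.
Qed.

(** The key coincidence: the digits after position pos b s1 and after
    pos (rot d (s1 + e - s2) b) s2 agree on a window of e + d digits, since
    both read the rotation of the same word M_d w_b with period e. *)
Lemma digits_agree (b s1 s2 t : nat) : b < 2 ^ (e - 1) -> s1 <= e - d -> s2 <= e - d ->
  t < e + d -> levin_digit (pos b s1 + t) = levin_digit (pos (rot d (s1 + e - s2) b) s2 + t).
Proof.
  intros Hb Hs1 Hs2 Ht. destruct e_bounds as [He1 He2].
  assert (Hb' : b < 2 ^ e)
    by (apply Nat.lt_le_trans with (2 ^ (e - 1)); [|apply Nat.pow_le_mono_r]; lia).
  unfold pos. rewrite <- !Nat.add_assoc, !(Nat.add_assoc (block_start (S d))).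
  rewrite !levin_digit_square by (try apply rot_lt; fold e; lia).
  rewrite Mw_rot by (apply Nat.mod_upper_bound; lia). fold e.
  f_equal. rewrite Nat.Div0.add_mod_idemp_l.
  replace (s2 + t + (s1 + e - s2)) with (s1 + t + 1 * e) by lia.
  symmetry. apply Nat.Div0.mod_add.
Qed.

Definition other_index (s t : nat) : nat := if t <? s then t else S t.

Lemma other_index_spec (s t : nat) : s < m -> t < m - 1 ->
  other_index s t < m /\ other_index s t <> s.
Proof. unfold other_index. destruct (Nat.ltb_spec t s); lia. Qed.

Lemma other_index_injective (s t t' : nat) : other_index s t = other_index s t' -> t = t'.
Proof. unfold other_index. destruct (Nat.ltb_spec t s), (Nat.ltb_spec t' s); lia. Qed.

Definition close_pairs : list (nat * nat) :=
  flat_map (fun s1 => flat_map (fun t =>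
      let s2 := other_index s1 t in
      map (fun b => (pos b s1, pos (rot d (s1 + e - s2) b) s2))
          (filter (fun b => rot d (s1 + e - s2) b <? B) (seq 0 B)))
    (seq 0 (m - 1))) (seq 0 m).

Lemma In_close_pairs (i j : nat) : In (i, j) close_pairs ->
  exists s1 s2 b, s1 < m /\ s2 < m /\ s1 <> s2 /\ b < B /\ rot d (s1 + e - s2) b < B /\
    i = pos b s1 /\ j = pos (rot d (s1 + e - s2) b) s2.
Proof.
  unfold close_pairs. intros Hij.
  apply in_flat_map in Hij as [s1 [Hs1 Hij]]. apply in_flat_map in Hij as [t [Ht Hij]].
  apply in_map_iff in Hij as [b [Heq Hb]]. apply filter_In in Hb as [Hb Hrot].
  apply in_seq in Hs1, Ht, Hb. apply Nat.ltb_lt in Hrot. injection Heq as <- <-.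
  destruct (other_index_spec s1 t ltac:(lia) ltac:(lia)).
  exists s1, (other_index s1 t), b. repeat split; auto; lia.
Qed.

(** Distinct index triples (s1, t, b) give distinct pairs: the first position
    determines s1 and b, the second one then determines t. *)
Lemma close_pairs_NoDup : NoDup close_pairs.
Proof.
  destruct e_bounds as [He1 He2].
  unfold close_pairs. apply NoDup_flat_map_disjoint; [apply seq_NoDup| |].
  - intros s1 Hs1. apply in_seq in Hs1. apply NoDup_flat_map_disjoint; [apply seq_NoDup| |].
    + intros t Ht. apply NoDup_map_NoDup_ForallPairs; [|apply NoDup_filter, seq_NoDup].
      intros b b' _ _ Heq. apply (f_equal fst) in Heq. cbn [fst] in Heq.
      now apply pos_injective in Heq as [? _]; try lia.
    + intros t1 t2 y Ht1 Ht2 Hy1 Hy2. apply in_seq in Ht1, Ht2.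
      apply in_map_iff in Hy1 as [b1 [<- _]], Hy2 as [b2 [Heq _]].
      apply (f_equal snd) in Heq. cbn [snd] in Heq.
      destruct (other_index_spec s1 t1), (other_index_spec s1 t2); try lia.
      apply pos_injective in Heq as [_ Heq]; try lia. now apply other_index_injective in Heq.
  - intros s1 s1' y Hs1 Hs1' Hy1 Hy2. apply in_seq in Hs1, Hs1'.
    apply in_flat_map in Hy1 as [t1 [_ Hy1]], Hy2 as [t2 [_ Hy2]].
    apply in_map_iff in Hy1 as [b1 [<- _]], Hy2 as [b2 [Heq _]].
    apply (f_equal fst) in Heq. cbn [fst] in Heq.
    apply pos_injective in Heq as [_ Heq]; lia.
Qed.

(** At least Q words per ordered pair of distinct offsets: rot d r is an
    injection of [0, 2Q) into itself, and B - (2Q - B) >= Q. *)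
Lemma close_pairs_length : m * (m - 1) * Q <= length close_pairs.
Proof.
  destruct e_bounds as [He1 He2].
  assert (EH : 2 ^ (e - 1) = 2 * Q) by (unfold Q; now replace (e - 1) with (S (e - 2)) by lia).
  assert (Hcount : forall r, Q <= length (filter (fun b => rot d r b <? B) (seq 0 B))).
  { intros r. eapply Nat.le_trans; [|apply (count_stay_below (rot d r) B (2 ^ (e - 1)))].
    - pose proof (Nat.Div0.mul_div_le Q 2). unfold B. lia.
    - unfold B. lia.
    - intros b Hb. now apply rot_lt_half.
    - intros b1 b2 Hb1 Hb2. apply rot_injective;
        apply Nat.lt_le_trans with (2 ^ (e - 1)); try apply Nat.pow_le_mono_r; lia. }
  unfold close_pairs. rewrite <- Nat.mul_assoc.
  rewrite <- (length_seq m 0) at 1. apply length_flat_map_ge. intros s1 _.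
  rewrite <- (length_seq (m - 1) 0) at 1. apply length_flat_map_ge. intros t _.
  rewrite length_map. apply Hcount.
Qed.

End LevinClosePairs.

Lemma INR_pow2 (k : nat) : INR (2 ^ k) = 2 ^ k.
Proof. now rewrite pow_INR. Qed.

(** All close pairs are counted by F_N(2): their points lie within
    2^-(e+d) = 2/N of each other. *)
Lemma levin_pair_count_bound (lam : R) (d : nat) :
  infinite_sum levin_term lam -> (1 <= d)%nat ->
  ((2 ^ d - d + 1) * (2 ^ d - d) * 2 ^ (2 ^ d - 2) <=
     pair_count (fun n => fracR (2 ^ n * lam)) (2 ^ (2 ^ d + d + 1)) 2)%nat.
Proof.
  intros Hlam Hd. destruct (e_bounds d Hd) as [He1 He2].
  replace (2 ^ d - d)%nat with (2 ^ d - d + 1 - 1)%nat at 2 by lia.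
  eapply Nat.le_trans; [apply (close_pairs_length d Hd)|].
  apply pair_count_ge; [now apply close_pairs_NoDup|].
  intros i j Hij.
  destruct (In_close_pairs d Hd i j Hij) as (s1 & s2 & b & Hs1 & Hs2 & Hne & Hb & Hrot & -> & ->).
  assert (HB : (2 * 2 ^ (2 ^ d - 2) - 2 ^ (2 ^ d - 2) / 2 <= 2 ^ (2 ^ d - 1))%nat)
    by (replace (2 ^ d - 1)%nat with (S (2 ^ d - 2)) by lia; simpl; lia).
  repeat split; try apply pos_range; try lia.
  - intros Hp. apply pos_injective in Hp; lia.
  - replace (2 / INR (2 ^ (2 ^ d + d + 1))) with (/ 2 ^ (2 ^ d + d))
      by (rewrite INR_pow2, (pow_add 2 (2 ^ d + d) 1), pow_1; pose proof (pow2_pos (2 ^ d + d));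
          field; lra).
        apply (fractional_parts_close levin_digit); [exact levin_digit_zeros | exact Hlam |].
    intros t Ht. apply digits_agree; lia.
Qed.

(** The lower bound F_N(2) >= (e-d+1)(e-d)/(8e) for N = 2^(e+d+1), e = 2^d:
    divide the pair count by N = 8 e 2^(e-2). *)
Lemma levin_pair_correlation_bound (lam : R) (d : nat) :
  infinite_sum levin_term lam -> (1 <= d)%nat ->
  F_pc (fun n => fracR (2 ^ n * lam)) (2 ^ (2 ^ d + d + 1)) 2 >=
    (INR (2 ^ d) - INR d + 1) * (INR (2 ^ d) - INR d) / (8 * INR (2 ^ d)).
Proof.
  intros Hlam Hd. unfold F_pc.
  pose proof (levin_pair_count_bound lam d Hlam Hd) as Hcount.
  destruct (e_bounds d Hd) as [He1 He2].
  set (e := (2 ^ d)%nat) in *. set (Q := (2 ^ (e - 2))%nat) in *.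
  assert (HN : (2 ^ (e + d + 1) = Q * e * 8)%nat)
    by (unfold Q; rewrite !Nat.pow_add_r; fold e;
        replace e with (S (S (e - 2))) at 1 by lia; simpl; lia).
  rewrite HN. apply le_INR in Hcount.
  rewrite !mult_INR, minus_INR, plus_INR, minus_INR in Hcount by lia.
  assert (HQ : 0 < INR Q) by (apply lt_0_INR, pow2_pos_nat).
  assert (He : 2 <= INR e) by (apply (le_INR 2) in He2; simpl in He2; lra).
  assert (H8 : INR 8 = 8) by (simpl; lra).
  rewrite !mult_INR, H8. simpl (INR 1) in Hcount.
  apply Rle_ge, Rle_trans
    with (/ (INR Q * INR e * 8) * ((INR e - INR d + 1) * (INR e - INR d) * INR Q)).
  - right. field. lra.
  - apply Rmult_le_compat_l; [left; apply Rinv_0_lt_compat; nra|].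
    now rewrite <- HN.
Qed.

(** A sequence with Poissonian pair correlations has F_N(2) -> 4, so
    F_N(2) >= 5 cannot hold for arbitrarily large N. *)
Lemma not_poissonian_of_large_values (x : nat -> R) :
  (forall N0, exists N, (N0 <= N)%nat /\ F_pc x N 2 >= 5) -> ~ poissonian_pc x.
Proof.
  intros Hlarge Hp.
  destruct (Hp 2 ltac:(lra) 1 ltac:(lra)) as [N0 HN0].
  destruct (Hlarge N0) as [N [HN HF]].
  specialize (HN0 N HN). unfold Rdist in HN0. apply Rabs_def2 in HN0. lra.
Qed.

Lemma pow2_ge_linear (d : nat) : (7 <= d)%nat -> (16 * d <= 2 ^ d)%nat.
Proof.
  induction d as [|d IH]; intros Hd; [lia|].
  destruct (Nat.eq_dec d 6) as [->|Hne]; [simpl; lia|].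
  specialize (IH ltac:(lia)). simpl. lia.
Qed.

Lemma lower_bound_large (d : nat) : (7 <= d)%nat ->
  (INR (2 ^ d) - INR d + 1) * (INR (2 ^ d) - INR d) / (8 * INR (2 ^ d)) >= 5.
Proof.
  intros Hd.
  pose proof (le_INR _ _ (pow2_ge_linear d Hd)) as H16. rewrite mult_INR in H16.
  assert (H128 : 128 <= INR (2 ^ d)).
  { pose proof (le_INR _ _ (Nat.pow_le_mono_r 2 7 d ltac:(lia) Hd)). simpl in *. lra. }
  set (E := INR (2 ^ d)) in *. pose proof (pos_INR d). simpl (INR 16) in H16.
  apply Rle_ge, Rmult_le_reg_r with (8 * E); [lra|].
  unfold Rdiv. rewrite Rmult_assoc, Rinv_l by lra. nra.
Qed.

Theorem mainTheorem8 (lam : R) (Hlam : infinite_sum levin_term lam) :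
  let x := fun n : nat => fracR (2 ^ n * lam) in
  (forall d : nat, (1 <= d)%nat ->
     let e := (2 ^ d)%nat in
     F_pc x (2 ^ (e + d + 1))%nat 2 >=
       (INR e - INR d + 1) * (INR e - INR d) / (8 * INR e))
  /\ ~ poissonian_pc x.
Proof.
  intros x. split.
  - intros d Hd. now apply levin_pair_correlation_bound.
  - apply not_poissonian_of_large_values. intros N0.
    set (d := (N0 + 7)%nat).
    exists (2 ^ (2 ^ d + d + 1))%nat. split.
    + pose proof (Nat.pow_gt_lin_r 2 (2 ^ d + d + 1) ltac:(lia)). unfold d in *. lia.
    + eapply Rge_trans;
        [apply levin_pair_correlation_bound; [exact Hlam | unfold d; lia]
        | apply lower_bound_large; unfold d; lia].
Qed.
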